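(* Let $\mathcal{A}'$ be an alphabet with $d\ge2$ letters and $\pi'$ an irreducible permutation on $\mathcal{A}'$, with $A$ the first letter of the top row and $E$ the first letter of the bottom row. Let $B\notin\mathcal{A}'$, $\mathcal{A}=\mathcal{A}'\cup\{B\}$, and let $C,D\in\mathcal{A}'$ with $(C,D)\ne(A,E)$ ($C=D$ allowed). Let $\pi$ be the permutation on $\mathcal{A}$ obtained from $\pi'$ by inserting $B$ immediately before $C$ in the top row and immediately before $D$ in the bottom row. Then $\pi$ is irreducible.
   Context: A permutation on an alphabet $\mathcal{A}$ is a pair $(\pi_0,\pi_1)$ of bijections $\mathcal{A}\to\{1,\dots,\#\mathcal{A}\}$, viewed as a top row and a bottom row listing the letters in order; it is irreducible if there is no $1\le k<\#\mathcal{A}$ such that the sets of the first $k$ letters of the top row and of the bottom row coincide. *)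

From mathcomp Require Import all_boot.
Set Implicit Arguments. Unset Strict Implicit. Unset Printing Implicit Defensive.

(* A permutation on an alphabet, viewed as its top row [top] and bottom row
   [bot]: two duplicate-free lists of the same letters (the alphabet is the
   set of letters of [top]).  The position of a letter in a row is its
   index (shifted by 1 w.r.t. the paper's {1,...,#A}). *)
Definition is_perm (T : eqType) (top bot : seq T) : Prop :=
  [/\ uniq top, uniq bot & perm_eq top bot].

Definition irreducible (T : eqType) (top bot : seq T) : Prop :=
  forall k : nat, 1 <= k -> k < size top -> ~ (take k top =i take k bot).

Definition insert_before (T : eqType) (b c : T) (s : seq T) : seq T :=
  take (index c s) s ++ b :: drop (index c s) s.

From mathcomp Require Import all_boot.

Set Implicit Arguments.
Unset Strict Implicit.

(* A prefix of a new row contains B exactly when it is longer than the old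
   position of the letter that B was inserted before.  If only one of the
   two prefixes of length k contains B they differ; if neither does, they are
   prefixes of the old rows, and k is at most the position of C < #A'; if both
   do, removing B leaves old prefixes of length k - 1, which is positive
   unless B was inserted at the head of both rows, i.e. (C, D) = (A, E). *)

Section InsertBefore.

Variables (T : eqType) (b c : T) (s : seq T).

Lemma perm_insert_before : perm_eq (insert_before b c s) (b :: s).
Proof.
rewrite /insert_before -[in b :: s](cat_take_drop (index c s) s).
by rewrite -cat1s perm_catCA.
Qed.

Lemma take_insert_before_small k :
  k <= index c s -> take k (insert_before b c s) = take k s.
Proof.
move=> le_k_cs; rewrite /insert_before take_cat size_takel ?index_size //.
case: ltnP => [lt_k_cs | le_cs_k]; first by rewrite take_takel // ltnW.
have -> : k = index c s by apply/eqP; rewrite eqn_leq le_k_cs.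
by rewrite subnn take0 cats0.
Qed.

Lemma take_insert_before_large k :
  index c s <= k -> take k.+1 (insert_before b c s) =i b :: take k s.
Proof.
move=> le_cs_k x; rewrite /insert_before take_cat size_takel ?index_size //.
rewrite ltnNge (leqW le_cs_k) subSn //= -[in take k s](subnKC le_cs_k) takeD.
by rewrite !inE !mem_cat inE orbCA.
Qed.

Hypothesis b_notin_s : b \notin s.

Lemma mem_take_insert_before k :
  (b \in take k (insert_before b c s)) = (index c s < k).
Proof.
have b_notin_take m : b \in take m s = false.
  by apply/negbTE; apply: contra b_notin_s; apply: mem_take.
case: ltnP => [lt_cs_k | le_k_cs]; last by rewrite take_insert_before_small.
by case: k lt_cs_k => // k le_cs_k; rewrite take_insert_before_large ?inE ?eqxx.
Qed.

End InsertBefore.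

Lemma index_eq0_head (T : eqType) (c a : T) (s : seq T) :
  ohead s = Some a -> index c s = 0 -> c = a.
Proof. by case: s => //= y s [->]; case: eqP. Qed.

Lemma eq_mem_cons_notin (T : eqType) (x : T) (s1 s2 : seq T) :
  x \notin s1 -> x \notin s2 -> x :: s1 =i x :: s2 -> s1 =i s2.
Proof.
move=> x_notin_s1 x_notin_s2 eq_s12 y; have := eq_s12 y; rewrite !inE.
by case: eqVneq => [-> | _]; rewrite ?(negbTE x_notin_s1) ?(negbTE x_notin_s2).
Qed.

Lemma is_perm_insert_before (T : eqType) (top bot : seq T) (b c d : T) :
  is_perm top bot -> b \notin top ->
  is_perm (insert_before b c top) (insert_before b d bot).
Proof.
move=> [uniq_top uniq_bot top_bot] b_notin_top.
have b_notin_bot : b \notin bot by rewrite -(perm_mem top_bot).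
rewrite /is_perm (perm_uniq (perm_insert_before _ _ _)) /= b_notin_top uniq_top.
rewrite (perm_uniq (perm_insert_before _ _ _)) /= b_notin_bot uniq_bot.
rewrite (perm_trans (perm_insert_before _ _ _)) //.
by rewrite perm_sym (perm_trans (perm_insert_before _ _ _)) // perm_sym perm_cons.
Qed.

Lemma irreducible_insert_before (T : eqType) (top bot : seq T) (a e b c d : T) :
  perm_eq top bot -> irreducible top bot ->
  ohead top = Some a -> ohead bot = Some e ->
  b \notin top -> c \in top -> (c, d) <> (a, e) ->
  irreducible (insert_before b c top) (insert_before b d bot).
Proof.
move=> top_bot irr_top_bot top_a bot_e b_notin_top c_in_top cd_neq_ae.
have b_notin_bot : b \notin bot by rewrite -(perm_mem top_bot).
have b_notin_take s m : b \notin s -> b \notin take m s.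
  by apply: contra; apply: mem_take.
move=> k k_gt0; rewrite (perm_size (perm_insert_before _ _ _)) ltnS => le_k_top.
move=> eq_prefixes; have := eq_prefixes b.
rewrite !mem_take_insert_before //.
case: (ltnP (index c top)) => [lt_ctop_k | le_k_ctop]; last first.
  move=> /esym/negbT; rewrite -leqNgt => le_k_dbot.
  apply: (irr_top_bot k) => //; first by rewrite (leq_ltn_trans le_k_ctop) ?index_mem.
  move=> x; rewrite -(take_insert_before_small b le_k_ctop).
  by rewrite -(take_insert_before_small b le_k_dbot).
case: k k_gt0 le_k_top eq_prefixes lt_ctop_k => // k _ le_k_top eq_prefixes.
rewrite !ltnS => le_ctop_k /esym le_dbot_k.
have eq_old_prefixes : take k top =i take k bot.
  apply: (eq_mem_cons_notin (x := b)); rewrite ?b_notin_take // => x.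
  by rewrite -(take_insert_before_large b le_ctop_k x) -(take_insert_before_large b le_dbot_k x).
clear eq_prefixes.
case: k => [|k] in le_k_top le_ctop_k le_dbot_k eq_old_prefixes *.
  move: le_ctop_k le_dbot_k; rewrite !leqn0 => /eqP ctop0 /eqP dbot0.
  by apply: cd_neq_ae; rewrite (index_eq0_head top_a ctop0) (index_eq0_head bot_e dbot0).
exact: (irr_top_bot k.+1).
Qed.

Theorem lemma5p4 (T : eqType) (top bot : seq T) (A E B C D : T) :
  is_perm top bot ->
  2 <= size top ->
  irreducible top bot ->
  ohead top = Some A ->
  ohead bot = Some E ->
  B \notin top ->
  C \in top -> D \in top ->
  (C, D) <> (A, E) ->
  is_perm (insert_before B C top) (insert_before B D bot) /\
  irreducible (insert_before B C top) (insert_before B D bot).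
Proof.
move=> perm_top_bot _ irr_top_bot top_A bot_E B_notin_top C_in_top _ CD_neq_AE.
split; first exact: is_perm_insert_before.
case: perm_top_bot => _ _ top_bot.
exact: irreducible_insert_before irr_top_bot top_A bot_E B_notin_top C_in_top CD_neq_AE.
Qed.
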